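(* Let $\mathcal M_1$ and $\mathcal M_2$ be the G-models defined in the context. Then: 1. $\mathcal M_1$ satisfies the condition $I(P,Q)$: for every state $u\in W_1$ there is $a\in\mathbb N$ with $\mathbf v\Vdash_1 P\mathbf a$ and $u\not\Vdash_1 Q\mathbf a$; 2. $\mathcal M_2$ does not satisfy the condition $J(P,Q)$, i.e. it is not the case that for every state $u\in W_2$ there is $a\in\mathbb N$ with $u\Vdash_2 P\mathbf a$ and $u\not\Vdash_2 Q\mathbf a$.
   Context: Let $\mathbb N=\{0,1,2,\dots\}$ and for $k>0$, $l\ge0$ let $k\mathbb N+l=\{kn+l: n\in\mathbb N\}$, $k\mathbb N=k\mathbb N+0$. A quasi-partition is a triple $(A,B,C)$ of pairwise disjoint subsets of $\mathbb N$ with $A\cup B\cup C=\mathbb N$, $A$ and $C$ infinite, and $B$ either empty or infinite. Order quasi-partitions by $(A,B,C)\sqsubseteq(D,E,F)$ iff $A\subseteq D$ and $F\subseteq C$. Let $\mathbf v=(\mathbf v_1,\mathbf v_2,\mathbf v_3)=(3\mathbb N,3\mathbb N+1,3\mathbb N+2)$ and $\mathbf w=(2\mathbb N,\emptyset,2\mathbb N+1)$. A G-model is $\langle W,\le,v_0,D,\phi\rangle$ with $\le$ a reflexive transitive relation on the nonempty set $W$, base point $v_0\le v$ for all $v$, nonempty domain $D$, and monotone interpretations $\phi(P)\subseteq W\times D^k$; atomic forcing is $v\Vdash P\mathbf a$ iff $\langle v,a\rangle\in\phi(P)$. $\mathcal M_1$: states $W_1$ = all quasi-partitions $(A,B,C)$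 with $\mathbf v\sqsubseteq(A,B,C)$ and $B\cap\mathbf v_2$ infinite; base point $\mathbf v$. $\mathcal M_2$: states $W_2$ = all quasi-partitions $(A,B,C)$ with $\mathbf w\sqsubseteq(A,B,C)$ and $B\ne\emptyset$, together with $\mathbf w$; base point $\mathbf w$. In both, the order is $\sqsubseteq$, the domain is $\mathbb N$, and for a state $s=(s_1,s_2,s_3)$ and $a\in\mathbb N$: $s\Vdash P\mathbf a$ iff $a\in s_1\cup s_2$, and $s\Vdash Q\mathbf a$ iff $a\in s_1$. $\Vdash_i$ denotes forcing in $\mathcal M_i$. *)

From Stdlib Require Import Arith Lia.

Definition nset := nat -> Prop.

Definition infinite (A : nset) : Prop := forall n, exists m, n <= m /\ A m.
Definition empty (A : nset) : Prop := forall x, ~ A x.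
Definition subset (A B : nset) : Prop := forall x, A x -> B x.

Definition arith (k l : nat) : nset := fun x => exists n, x = k * n + l.

Record triple := Triple { t1 : nset; t2 : nset; t3 : nset }.

Definition quasi_partition (s : triple) : Prop :=
  (forall x, ~ (t1 s x /\ t2 s x)) /\
  (forall x, ~ (t1 s x /\ t3 s x)) /\
  (forall x, ~ (t2 s x /\ t3 s x)) /\
  (forall x, t1 s x \/ t2 s x \/ t3 s x) /\
  infinite (t1 s) /\ infinite (t3 s) /\
  (empty (t2 s) \/ infinite (t2 s)).

Definition qle (s s' : triple) : Prop := subset (t1 s) (t1 s') /\ subset (t3 s') (t3 s).

Definition v : triple := Triple (arith 3 0) (arith 3 1) (arith 3 2).
Definition w : triple := Triple (arith 2 0) (fun _ => False) (arith 2 1).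

(* Atomic forcing in both models: s ||- P a iff a in s1 ∪ s2; s ||- Q a iff a in s1. *)
Definition forcesP (s : triple) (a : nat) : Prop := t1 s a \/ t2 s a.
Definition forcesQ (s : triple) (a : nat) : Prop := t1 s a.

Definition W1 (s : triple) : Prop :=
  quasi_partition s /\ qle v s /\ infinite (fun x => t2 s x /\ t2 v x).

Definition W2 (s : triple) : Prop :=
  (quasi_partition s /\ qle w s /\ exists x, t2 s x) \/ s = w.

Definition I_PQ_M1 : Prop :=
  forall u, W1 u -> exists a : nat, forcesP v a /\ ~ forcesQ u a.

Definition J_PQ_M2 : Prop :=
  forall u, W2 u -> exists a : nat, forcesP u a /\ ~ forcesQ u a.


Lemma not_forcesQ_of_t2 (s : triple) (a : nat) :
  quasi_partition s -> t2 s a -> ~ forcesQ s a.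
Proof.
  intros [disj12 _] H2 HQ.
  exact (disj12 a (conj HQ H2)).
Qed.

Lemma forcesP_forcesQ_of_empty_t2 (s : triple) (a : nat) :
  empty (t2 s) -> forcesP s a -> forcesQ s a.
Proof.
  intros Hempty [H1 | H2].
  - exact H1.
  - contradiction (Hempty a H2).
Qed.

Lemma I_PQ_M1_holds : I_PQ_M1.
Proof.
  intros u [Hqp [_ Hinf]].
  destruct (Hinf 0) as [a [_ [H2u H2v]]].
  exists a; split.
  - right; exact H2v.
  - exact (not_forcesQ_of_t2 u a Hqp H2u).
Qed.

(* The base point w itself is a state of M2, and its middle component is empty. *)
Lemma J_PQ_M2_fails : ~ J_PQ_M2.
Proof.
  intros HJ.
  destruct (HJ w (or_intror eq_refl)) as [a [HP HQ]].
  apply HQ, forcesP_forcesQ_of_empty_t2; [intros x Hx; exact Hx | exact HP].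
Qed.

Theorem lemma5p1 : I_PQ_M1 /\ ~ J_PQ_M2.
Proof.
  exact (conj I_PQ_M1_holds J_PQ_M2_fails).
Qed.
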